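(* Let $p>q>1$ be relatively prime integers and let $a\ge1$, $b\ge0$ be integers. If a sequence $\mathbf{x}=x_0x_1\cdots$ is $\frac pq$-automatic, then the sequence $(x_{an+b})_{n\ge0}$ is also $\frac pq$-automatic.
   Context: $A_p=\{0,\ldots,p-1\}$; for $w=w_\ell\cdots w_0\in A_p^*$, $\mathrm{val}_{\frac pq}(w)=\sum_{i=0}^{\ell}\frac{w_i}{q}(\frac pq)^i$; $\mathrm{rep}_{\frac pq}(n)$ is the unique word not starting with $0$ with value $n$ ($\mathrm{rep}_{\frac pq}(0)=\varepsilon$). A sequence $\mathbf{x}$ over a finite alphabet $B$ is $\frac pq$-automatic if there is a deterministic finite automaton with output $(Q,q_0,A_p,\delta,\tau:Q\to B)$ with $x_n=\tau(\delta(q_0,\mathrm{rep}_{\frac pq}(n)))$ for all $n\ge0$. *)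

From mathcomp Require Import all_boot all_algebra.
Set Implicit Arguments. Unset Strict Implicit. Unset Printing Implicit Defensive.
Import GRing.Theory Num.Theory.

(* Words over A_p are represented as [seq nat], written most significant
   digit first: the word w_l ... w_0 is [:: w_l; ...; w_0]. *)

(* val_{p/q}(w) = sum_i (w_i / q) (p/q)^i, computed by Horner's scheme. *)
Definition val_pq (p q : nat) (w : seq nat) : rat :=
  (foldl (fun acc d => (p%:R / q%:R) * acc + d%:R / q%:R) 0 w)%R.

(* rep_{p/q}(n): rep(0) = eps, and for n > 0, writing q*n = p*m + a with
   0 <= a < p, rep(n) = rep(m) a  (m < n since p > q).  Fuel n suffices. *)
Fixpoint rep_aux (p q fuel n : nat) : seq nat :=
  match fuel with
  | 0 => [::]
  | fuel'.+1 =>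
      if n == 0 then [::]
      else rcons (rep_aux p q fuel' ((q * n) %/ p)) ((q * n) %% p)
  end.

Definition rep_pq (p q n : nat) : seq nat := rep_aux p q n n.

(* A deterministic finite automaton with output reading A_p (digits are nats;
   only digits < p ever occur in representations). *)
Record DFAO (B : Type) := {
  dfa_state : finType;
  dfa_init : dfa_state;
  dfa_delta : dfa_state -> nat -> dfa_state;
  dfa_out : dfa_state -> B
}.

Definition dfa_run (B : Type) (M : DFAO B) (w : seq nat) : dfa_state M :=
  foldl (@dfa_delta B M) (@dfa_init B M) w.

Definition pq_automatic (p q : nat) (B : finType) (x : nat -> B) : Prop :=
  exists M : DFAO B, forall n, x n = @dfa_out B M (dfa_run M (rep_pq p q n)).

From mathcomp Require Import all_boot all_algebra.
From mathcomp Require Import zify.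

Set Implicit Arguments.
Unset Strict Implicit.
Unset Printing Implicit Defensive.

(* If q n = p m + d with 0 <= d < p, then q (a n + c) = p (a m) + (a d + c q),
   so rep (a n + c) is rep (a m + c') followed by the digit (a d + c q) mod p,
   with the carry c' = (a d + c q) div p bounded independently of n.  Hence an
   automaton whose state records, for every carry c <= K, the state of the
   given automaton after reading rep (a n + c) reads rep n deterministically,
   and outputs the component of carry b.  Taking K = a p + b keeps all carries
   in range. *)

Section Representation.

Variables (p q : nat).
Hypothesis ltn_qp : q < p.

Lemma ltn_divq {n} : 0 < n -> q * n %/ p < n.
Proof. by move=> n_gt0; rewrite ltn_divLR; nia. Qed.

Lemma rep_aux_fuel f1 f2 n : n <= f1 -> n <= f2 -> rep_aux p q f1 n = rep_aux p q f2 n.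
Proof.
elim: f1 f2 n => [|f1 IH] [|f2] [|n] //= le_n_f1 le_n_f2.
by congr rcons; apply: IH; rewrite -ltnS; apply: leq_trans (ltn_divq (ltn0Sn n)) _.
Qed.

Lemma rep_pq0 : rep_pq p q 0 = [::].
Proof. by []. Qed.

Lemma rep_pq_rcons n : 0 < n ->
  rep_pq p q n = rcons (rep_pq p q (q * n %/ p)) (q * n %% p).
Proof.
case: n => // n _; rewrite /rep_pq /=.
by congr rcons; apply: rep_aux_fuel => //; rewrite -ltnS ltn_divq.
Qed.

Lemma rep_pq_affine a n c : 0 < a -> 0 < n ->
  rep_pq p q (a * n + c) =
  rcons (rep_pq p q (a * (q * n %/ p) + (a * (q * n %% p) + c * q) %/ p))
        ((a * (q * n %% p) + c * q) %% p).
Proof.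
move=> a_gt0 n_gt0; have p_gt0 : 0 < p by nia.
rewrite rep_pq_rcons; last by nia.
have -> : q * (a * n + c) = a * (q * n %/ p) * p + (a * (q * n %% p) + c * q).
  by rewrite mulnDr mulnCA {1}(divn_eq (q * n) p); lia.
by rewrite divnMDl ?modnMDl.
Qed.

End Representation.

Lemma run_rcons B (M : DFAO B) w d :
  dfa_run M (rcons w d) = dfa_delta (dfa_run M w) d.
Proof. by rewrite /dfa_run foldl_rcons. Qed.

Section CarryAutomaton.

Variables (p q : nat) (B : Type) (M : DFAO B) (a b K : nat).
Hypotheses (ltn_qp : q < p) (a_gt0 : 0 < a) (le_ap_K : a * p <= K).

Definition carry_digit (d c : nat) := a * d + c * q.

Definition carry_dfao : DFAO B := {|
  dfa_state := {ffun 'I_K.+1 -> dfa_state M};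
  dfa_init := [ffun c : 'I_K.+1 => dfa_run M (rep_pq p q c)];
  dfa_delta f d := [ffun c : 'I_K.+1 =>
    dfa_delta (f (inord (carry_digit d c %/ p))) (carry_digit d c %% p)];
  dfa_out f := dfa_out (f (inord b))
|}.

Lemma carry_bound d c : d < p -> c <= K -> carry_digit d c %/ p <= K.
Proof.
move=> lt_dp le_cK; have p_gt0 : 0 < p by nia.
by rewrite -ltnS ltn_divLR // /carry_digit; nia.
Qed.

Lemma run_carry_dfao n (c : 'I_K.+1) :
  dfa_run carry_dfao (rep_pq p q n) c = dfa_run M (rep_pq p q (a * n + c)).
Proof.
elim/ltn_ind: n c => n IH c.
have [->|n_gt0] := posnP n; first by rewrite rep_pq0 ffunE muln0.
have p_gt0 : 0 < p by nia.
rewrite rep_pq_rcons // rep_pq_affine // !run_rcons ffunE IH ?ltn_divq //.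
by rewrite inordK // ltnS carry_bound ?ltn_pmod // -ltnS.
Qed.

End CarryAutomaton.

Theorem mainTheorem15 (p q : nat) (hqp : q < p) (hq : 1 < q) (hcop : coprime p q)
  (a b : nat) (ha : 1 <= a) (B : finType) (x : nat -> B) :
  pq_automatic p q x -> pq_automatic p q (fun n => x (a * n + b)).
Proof.
case=> M xM; exists (carry_dfao p q M a b (a * p + b)) => n.
have le_b_K : b < (a * p + b).+1 by rewrite ltnS leq_addl.
by rewrite xM /= run_carry_dfao ?leq_addr // inordK.
Qed.
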